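(* Let $L$ be a frame, $X_L$ its Priestley space, and $Y_L$ the spatial part of $X_L$. Then $L$ is a Stone frame if and only if $X_L$ is a Stone L-space. If in addition $L$ is spatial, these conditions are equivalent to $Y_L$ being a Stone space.
   Context: A frame is a complete lattice satisfying $a\wedge\bigvee S=\bigvee\{a\wedge s\mid s\in S\}$. In a frame $L$, $a\ll b$ means whenever $b\le\bigvee S$ there is finite $T\subseteq S$ with $a\le\bigvee T$; $L$ is compact if $1\ll 1$. The pseudocomplement is $a^*=\bigvee\{x\mid a\wedge x=0\}$; $a$ is complemented if $a\vee a^*=1$. $L$ is zero-dimensional if each element is the join of the complemented elements below it; a Stone frame is a compact zero-dimensional frame. $L$ is spatial if completely prime filters separate its elements. A Priestley space is a Stone space $X$ with a partial order such that clopen upsets separate points. An L-space is a Priestley space in which the downset of each clopen set is clopen and the closure of each open upset is open. ${\sf ClopUp}(X)$ is the set of clopen upsets; $\mathrm{cl}$ denotes closure. The Priestley space $X_L$ is the set of prime filters of $L$ ordered by inclusion with topology generated by the sets $\varphi(a)=\{x\mid a\in x\}$ and their complements. The spatial part of $X$ is $Y=\{y\in X\mid{\downarrow}y\text{ clopen}\}$, topologized by declaring $V\subseteq Y$ open iff $V=U\cap Y$ for some $U\in{\sf ClopUp}(X)$. For $U,V\in{\sf ClopUp}(X)$, $V\ll U$ means that for every open upset $W$, $U\subseteq\mathrm{cl}\,W$ implies $V\subseteq W$; $\ker U=\bigcup\{V\in{\sf ClopUp}(X)\mid V\ll U\}$; $X$ is L-compact if $X=\ker X$. A biset is a set that is both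 an upset and a downset; ${\sf ClopBi}(X)$ is the set of clopen bisets; $\mathrm{cen}\,U=\bigcup\{V\in{\sf ClopBi}(X)\mid V\subseteq U\}$. A Stone L-space is an L-compact L-space with $\mathrm{cen}\,U$ dense in $U$ for each $U\in{\sf ClopUp}(X)$. A Stone space is a compact Hausdorff zero-dimensional space. *)

(* the frame is a mathcomp tbLatticeType equipped with an
   arbitrary-join operation; the (ad hoc) topologies of the paper are given
   by explicit predicates on sets of points. *)
From HB Require Import structures.
From mathcomp Require Import all_boot all_order.
From Stdlib Require List.
Set Implicit Arguments. Unset Strict Implicit. Unset Printing Implicit Defensive.
Import Order.TTheory.
Local Open Scope order_scope.

Definition subset_of (T : Type) (A B : T -> Prop) : Prop := forall x, A x -> B x.

Section Frames.
Context {disp : Order.disp_t} (L : tbLatticeType disp) (sup : (L -> Prop) -> L).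

Record is_frame : Prop := {
  sup_ub : forall (S : L -> Prop) x, S x -> x <= sup S;
  sup_least : forall (S : L -> Prop) y, (forall x, S x -> x <= y) -> sup S <= y;
  frame_distr : forall a (S : L -> Prop),
     Order.meet a (sup S) = sup (fun z => exists s, S s /\ z = Order.meet a s) }.

Definition way_below (a b : L) : Prop :=
  forall S : L -> Prop, b <= sup S ->
    exists t : seq L, (forall s, List.In s t -> S s) /\ a <= sup (fun s => List.In s t).

Definition compact_frame : Prop := way_below \top \top.

Definition pseudocompl (a : L) : L := sup (fun x => Order.meet a x = \bot).

Definition complemented (a : L) : Prop := Order.join a (pseudocompl a) = \top.

Definition zero_dim_frame : Prop :=
  forall a : L, a = sup (fun c => complemented c /\ c <= a).

Definition stone_frame : Prop := compact_frame /\ zero_dim_frame.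

Definition lattice_filter (F : L -> Prop) : Prop :=
  F \top /\ (forall a b, F a -> a <= b -> F b) /\
  (forall a b, F a -> F b -> F (Order.meet a b)).

Definition completely_prime_filter (F : L -> Prop) : Prop :=
  lattice_filter F /\ (forall S : L -> Prop, F (sup S) -> exists s, S s /\ F s).

Definition spatial_frame : Prop :=
  forall a b : L, a <> b ->
    exists F, completely_prime_filter F /\ ((F a /\ ~ F b) \/ (F b /\ ~ F a)).
End Frames.

Section PrimeFilters.
Context {disp : Order.disp_t} (L : tbLatticeType disp).

Definition prime_filter (x : L -> Prop) : Prop :=
  lattice_filter x /\ ~ x \bot /\
  (forall a b, x (Order.join a b) -> x a \/ x b).

Definition XL : Type := { x : L -> Prop | prime_filter x }.

Definition XL_le (x y : XL) : Prop := subset_of (proj1_sig x) (proj1_sig y).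

Definition phi (a : L) : XL -> Prop := fun x => proj1_sig x a.

Definition XL_subbase (U : XL -> Prop) : Prop :=
  exists a : L, U = phi a \/ U = (fun x => ~ phi a x).

End PrimeFilters.

Section Topo.
Context {T : Type}.

Definition generated_opens (B : (T -> Prop) -> Prop) (U : T -> Prop) : Prop :=
  forall x, U x -> exists s : seq (T -> Prop),
    (forall V, List.In V s -> B V) /\ (forall V, List.In V s -> V x) /\
    subset_of (fun y => forall V, List.In V s -> V y) U.

Variable op : (T -> Prop) -> Prop.

Definition closed_set (U : T -> Prop) : Prop := op (fun x => ~ U x).
Definition clopen_set (U : T -> Prop) : Prop := op U /\ closed_set U.
Definition closure (U : T -> Prop) : T -> Prop :=
  fun x => forall V, op V -> V x -> exists y, V y /\ U y.

Definition compact_space : Prop :=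
  forall C : (T -> Prop) -> Prop, (forall U, C U -> op U) ->
    (forall x, exists U, C U /\ U x) ->
    exists s : seq (T -> Prop), (forall U, List.In U s -> C U) /\
      (forall x, exists U, List.In U s /\ U x).

Definition hausdorff_space : Prop :=
  forall x y : T, x <> y -> exists U V, op U /\ op V /\ U x /\ V y /\
    (forall z, ~ (U z /\ V z)).

Definition zero_dim_space : Prop :=
  forall U, op U -> forall x, U x -> exists V, clopen_set V /\ V x /\ subset_of V U.

Definition stone_space : Prop :=
  compact_space /\ hausdorff_space /\ zero_dim_space.

Variable le : T -> T -> Prop.

Definition upset (U : T -> Prop) : Prop := forall x y, U x -> le x y -> U y.
Definition downset (U : T -> Prop) : Prop := forall x y, U x -> le y x -> U y.
Definition down (U : T -> Prop) : T -> Prop := fun y => exists x, U x /\ le y x.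

Definition partial_order : Prop :=
  (forall x, le x x) /\ (forall x y z, le x y -> le y z -> le x z) /\
  (forall x y, le x y -> le y x -> x = y).

Definition clopup (U : T -> Prop) : Prop := clopen_set U /\ upset U.

Definition priestley_space : Prop :=
  stone_space /\ partial_order /\
  (forall x y, ~ le x y -> exists U, clopup U /\ U x /\ ~ U y).

Definition L_space : Prop :=
  priestley_space /\
  (forall U, clopen_set U -> clopen_set (down U)) /\
  (forall U, op U -> upset U -> op (closure U)).

Definition way_below_sp (V U : T -> Prop) : Prop :=
  forall W, op W -> upset W -> subset_of U (closure W) -> subset_of V W.

Definition ker (U : T -> Prop) : T -> Prop :=
  fun x => exists V, clopup V /\ way_below_sp V U /\ V x.

Definition L_compact : Prop := forall x, ker (fun _ => True) x.

Definition cen (U : T -> Prop) : T -> Prop :=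
  fun x => exists V, clopen_set V /\ upset V /\ downset V /\ subset_of V U /\ V x.

Definition stone_L_space : Prop :=
  L_space /\ L_compact /\
  (forall U, clopup U -> subset_of U (closure (cen U))).
End Topo.

Section Spaces.
Context {disp : Order.disp_t} (L : tbLatticeType disp).

Definition XL_opens : (XL L -> Prop) -> Prop := generated_opens (@XL_subbase _ L).

Definition YL : Type :=
  { y : XL L | clopen_set XL_opens (down (@XL_le _ L) (fun z => z = y)) }.

Definition YL_opens (V : YL -> Prop) : Prop :=
  exists U, clopup XL_opens (@XL_le _ L) U /\ V = (fun y => U (proj1_sig y)).
End Spaces.

From Pilot Require Import Defs.
From mathcomp Require Import all_boot all_order boolp.
From mathcomp Require classical_sets.
From Stdlib Require Import Classical.
From Stdlib Require List.

(* By the prime filter theorem, a |-> phi a is an isomorphism from the frame L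
   onto the clopen upsets of X_L, and the closure of a union of sets phi a is
   phi of the join; X_L is compact by Alexander's subbase lemma.  Under this
   dictionary compactness of L is L-compactness of X_L, and complemented
   elements are exactly the clopen bisets, so zero dimensionality of L is the
   density of cen U in every clopen upset U.  The points of Y_L are the
   completely prime filters; when L is spatial they separate the elements of L,
   so compactness and zero dimensionality transfer between L and Y_L in the
   same way, the complemented elements also making Y_L Hausdorff. *)

Set Implicit Arguments. Unset Strict Implicit. Unset Printing Implicit Defensive.
Import Order.TTheory.
Local Open Scope order_scope.

(* Lets [phi] be used unapplied, as in [map phi t]. *)
Arguments phi {disp L} a _.

Lemma zorn_superset (U : Type) (P : (U -> Prop) -> Prop) (A0 : U -> Prop) :
  P A0 ->
  (forall Ch : (U -> Prop) -> Prop, (forall A, Ch A -> P A) ->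
     (forall A B, Ch A -> Ch B -> subset_of A B \/ subset_of B A) ->
     (exists A, Ch A) -> P (fun u => exists A, Ch A /\ A u)) ->
  exists M, [/\ P M, subset_of A0 M &
                 forall B, P B -> subset_of M B -> subset_of B M].
Proof.
move=> PA0 Pchain.
(* Zorn for P' A := P (A0 \/ A): the empty chain is then harmless. *)
have [|A [PA Amax]] := @classical_sets.Zorn_bigcup U (fun A => P (fun u => A0 u \/ A u)).
  move=> F FP Ftot; rewrite /classical_sets.bigcup /=.
  case: (classic (exists X, F X)) => [[X0 FX0]|nF]; last first.
    suff -> : (fun u => A0 u \/ exists2 X, F X & X u) = A0 by [].
    by rewrite predeqE => u; split=> [[//|[X FX _]]|]; [case: nF; exists X|left].
  pose Ch C := exists2 X, F X & C = (fun u => A0 u \/ X u).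
  suff -> : (fun u => A0 u \/ exists2 X, F X & X u) = (fun u => exists C, Ch C /\ C u).
    apply: Pchain; [by move=> C [X FX ->]; apply: FP| |by exists (fun u => A0 u \/ X0 u), X0].
    move=> C D [X FX ->] [Y FY ->].
    by case: (Ftot X Y FX FY) => XY; [left|right] => u [|/XY]; auto.
  rewrite predeqE => u; split=> [[A0u|[X FX Xu]]|[C [[X FX ->] [A0u|Xu]]]].
  - by exists (fun u => A0 u \/ X0 u); split; [exists X0|left].
  - by exists (fun u => A0 u \/ X u); split; [exists X|right].
  - by left.
  - by right; exists X.
exists (fun u => A0 u \/ A u); split=> // [u A0u|B PB sAB]; first by left.
have eB : (fun u => A0 u \/ B u) = B.
  by rewrite predeqE => u; split=> [[A0u|//]|Bu]; [apply: sAB; left|right].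
apply: NNPP => nBM; apply: (Amax B); last by rewrite eB.
split=> [u Au|BA]; first by apply: sAB; right.
by apply: nBM => u Bu; right; apply: BA.
Qed.

Section Seqs.
Variable A : Type.
Implicit Types (s : seq A) (P Q : A -> Prop).

Lemma seq_in_image (B : Type) P (f : A -> B) (s : seq B) :
  (forall U, List.In U s -> exists2 c, P c & U = f c) ->
  exists2 t, (forall c, List.In c t -> P c) & s = map f t.
Proof.
elim: s => [|U s IH] H; first by exists [::].
have [c Pc ->] := H U (or_introl erefl).
have [t tP ->] := IH (fun V sV => H V (or_intror sV)).
by exists (c :: t) => // c' [<-|/tP].
Qed.

Lemma seq_split_or P Q s : (forall U, List.In U s -> P U \/ Q U) ->
  exists2 s', (forall U, List.In U s' -> P U) &
              forall U, List.In U s -> List.In U s' \/ Q U.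
Proof.
elim: s => [|a s IH] H; first by exists [::].
have [s' s'P ss'] := IH (fun U sU => H U (or_intror sU)).
case: (classic (P a)) => Pa.
  exists (a :: s') => [U [<-|/s'P]//|U [<-|/ss' [s'U|]]]; by [left; left|left; right|right].
exists s' => // U [<-|/ss' //]; case: (H a (or_introl erefl)) => //; by right.
Qed.

Lemma not_all_in_seq P s : ~ (forall a, List.In a s -> P a) -> exists2 a, List.In a s & ~ P a.
Proof.
move=> nall; apply: NNPP => H; apply: nall => a sa.
by apply: NNPP => nPa; apply: H; exists a.
Qed.

Lemma seq_in_chain (Ch : (A -> Prop) -> Prop) s :
  (forall X Y, Ch X -> Ch Y -> subset_of X Y \/ subset_of Y X) -> (exists X, Ch X) ->
  (forall u, List.In u s -> exists X, Ch X /\ X u) ->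
  exists X, Ch X /\ forall u, List.In u s -> X u.
Proof.
move=> Chtot [X0 ChX0]; elim: s => [|u s IH] H; first by exists X0.
have [X [ChX Xu]] := H u (or_introl erefl).
have [Y [ChY Ys]] := IH (fun v sv => H v (or_intror sv)).
case: (Chtot X Y ChX ChY) => [XY|YX].
  by exists Y; split=> // v [<-|/Ys]; [apply: XY|].
by exists X; split=> // v [<-|/Ys/YX].
Qed.

(* [V z \/ ...] says that the finite family [l] covers the complement of [V]. *)
Lemma cocover_meet_seq (M : (A -> Prop) -> Prop) (s : seq (A -> Prop)) :
  (forall V, List.In V s -> exists2 l, (forall U, List.In U l -> M U) &
       forall z, V z \/ exists2 U, List.In U l & U z) ->
  exists2 l, (forall U, List.In U l -> M U) &
      forall z, (forall V, List.In V s -> V z) \/ exists2 U, List.In U l & U z.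
Proof.
elim: s => [|V s IH] H; first by exists [::] => // z; left.
have [l1 l1M l1cov] := H V (or_introl erefl).
have [l2 l2M l2cov] := IH (fun W sW => H W (or_intror sW)).
exists (l1 ++ l2) => [U /List.in_app_iff [/l1M|/l2M] //|z].
case: (l2cov z) => [sz|[U l2U Uz]]; last first.
  by right; exists U => //; apply/List.in_app_iff; right.
case: (l1cov z) => [Vz|[U l1U Uz]]; last first.
  by right; exists U => //; apply/List.in_app_iff; left.
by left=> W [<-|/sz].
Qed.

End Seqs.

Definition has_finite_subcover (T : Type) (C : (T -> Prop) -> Prop) : Prop :=
  exists s : seq (T -> Prop),
    (forall U, List.In U s -> C U) /\ (forall x, exists U, List.In U s /\ U x).

Section Topology.
Context {T : Type} (op : (T -> Prop) -> Prop).
Implicit Types (U V K : T -> Prop).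

Lemma closed_setC U : op U -> closed_set op (fun x => ~ U x).
Proof.
rewrite /closed_set; suff -> : (fun x => ~ ~ U x) = U by [].
by rewrite predeqE => x; split=> [/NNPP|Ux /(_ Ux)].
Qed.

Lemma clopen_setC U : clopen_set op U -> clopen_set op (fun x => ~ U x).
Proof. by case=> oU cU; split; [|apply: closed_setC]. Qed.

Lemma closure_mono U V : subset_of U V -> subset_of (Defs.closure op U) (Defs.closure op V).
Proof. by move=> UV x clx W oW Wx; have [y [Wy /UV Vy]] := clx W oW Wx; exists y. Qed.

Lemma closure_min U K : closed_set op K -> subset_of U K -> subset_of (Defs.closure op U) K.
Proof.
move=> cK UK x clx; apply: NNPP => nKx.
by have [y [nKy /UK Ky]] := clx _ cK nKx.
Qed.

Lemma compact_closed_cover_image (A : Type) (S : A -> Prop) (f : A -> T -> Prop) K :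
  compact_space op -> closed_set op K -> (forall a, S a -> op (f a)) ->
  (forall x, K x -> exists2 a, S a & f a x) ->
  exists2 t, (forall a, List.In a t -> S a) &
             forall x, K x -> exists2 a, List.In a t & f a x.
Proof.
move=> cpt cK Sop Kcov.
pose C U := (exists2 a, S a & U = f a) \/ U = (fun x => ~ K x).
have [|x|s [sC scov]] := cpt C.
- by move=> U [[a /Sop oa ->]|->].
- case: (classic (K x)) => [/Kcov [a Sa fax]|nKx].
    by exists (f a); split=> //; left; exists a.
  by exists (fun x => ~ K x); split=> //; right.
have [s' s'f ss'] := seq_split_or sC.
have [t tS es'] := seq_in_image s'f; rewrite {s'f}es' in ss'.
exists t => // x Kx; have [U [sU Ux]] := scov x.
case: (ss' U sU) => [/List.in_map_iff [a [fa ta]]|eU]; last by rewrite eU in Ux.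
by exists a; rewrite ?fa.
Qed.

End Topology.

Section GeneratedTopology.
Context {T : Type} (B : (T -> Prop) -> Prop).
Local Notation op := (generated_opens B).
Implicit Types (U V : T -> Prop).

Lemma generated_opens_local U :
  (forall x, U x -> exists V, [/\ op V, V x & subset_of V U]) -> op U.
Proof.
move=> H x /H [V [oV Vx VU]]; have [s [sB [sx sV]]] := oV x Vx.
by exists s; split=> //; split=> // y /sV /VU.
Qed.

Lemma generated_opens_subbase U : B U -> op U.
Proof.
move=> BU x Ux; exists [:: U]; split; first by move=> V [<-|].
by split=> [V [<-|]|y /(_ U (or_introl erefl))].
Qed.

Lemma generated_opens_meet U V : op U -> op V -> op (fun x => U x /\ V x).
Proof.
move=> oU oV x [Ux Vx].
have [s1 [s1B [s1x s1U]]] := oU x Ux; have [s2 [s2B [s2x s2V]]] := oV x Vx.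
exists (s1 ++ s2); split; last split.
- by move=> W /List.in_app_iff [/s1B|/s2B].
- by move=> W /List.in_app_iff [/s1x|/s2x].
- move=> y ys; split; [apply: s1U|apply: s2V] => W sW; apply: ys; apply/List.in_app_iff; auto.
Qed.

Lemma generated_opens_join U V : op U -> op V -> op (fun x => U x \/ V x).
Proof.
move=> oU oV; apply: generated_opens_local => x [Ux|Vx].
  by exists U; split=> // y; left.
by exists V; split=> // y; right.
Qed.

Theorem alexander_subbase :
  (forall D, (forall U, D U -> B U) -> (forall x, exists U, D U /\ U x) ->
     has_finite_subcover D) ->
  compact_space op.
Proof.
move=> subcover C Cop Ccov; apply: NNPP => nC.
pose P D := (forall U, D U -> op U) /\ ~ has_finite_subcover D.
have [M [[Mop nM] CM Mmax]] : exists M, [/\ P M, subset_of C M &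
    forall D, P D -> subset_of M D -> subset_of D M].
  apply: zorn_superset => [//|Ch ChP Chtot Chne]; split.
    by move=> U [A [ChA AU]]; apply: (proj1 (ChP A ChA)).
  move=> [s [sCh scov]]; have [A [ChA sA]] := seq_in_chain Chtot Chne sCh.
  by apply: (proj2 (ChP A ChA)); exists s.
have cocover V : B V -> ~ M V -> exists2 l, (forall U, List.In U l -> M U) &
    forall z, V z \/ exists2 U, List.In U l & U z.
  move=> BV nMV.
  have [s [sMV scov]] : has_finite_subcover (fun U => M U \/ U = V).
    apply: NNPP => nfin; apply: nMV.
    apply: (Mmax (fun U => M U \/ U = V)); [|by move=> U; left|by right].
    by split=> // U [/Mop|->] //; apply: generated_opens_subbase.
  have [l lM sl] := seq_split_or sMV.
  exists l => // z; have [U [sU Uz]] := scov z.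
  by case: (sl U sU) => [lU|eU]; [right; exists U|left; rewrite -eU].
(* Every point lies in a subbasic member of M, so M would be finitely subcoverable. *)
have MBcov x : exists U, (M U /\ B U) /\ U x.
  have [U [CU Ux]] := Ccov x; have [s [sB [sx sU]]] := Cop U CU x Ux.
  apply: NNPP => nMx.
  have nMs V : List.In V s -> ~ M V.
    by move=> sV MV; apply: nMx; exists V; split; [split; [|apply: sB]|apply: sx].
  have [l lM lcov] := cocover_meet_seq (fun V sV => cocover V (sB V sV) (nMs V sV)).
  apply: nM; exists (U :: l); split=> [V [<-|/lM]//|z]; first by apply: CM.
  case: (lcov z) => [/sU Uz|[V lV Vz]]; first by exists U; split=> //; left.
  by exists V; split=> //; right.
have [s [sMB scov]] := subcover _ (fun U => @proj2 _ _) MBcov.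
by apply: nM; exists s; split=> // U /sMB [].
Qed.

End GeneratedTopology.

Section Frame.
Context {disp : Order.disp_t} {L : tbLatticeType disp} {sup : (L -> Prop) -> L}.
Hypothesis HL : is_frame sup.
Implicit Types (a b c d e : L) (S : L -> Prop).

Lemma sup_pair a b : sup (fun z => z = a \/ z = b) = a `|` b.
Proof.
apply: le_anti; apply/andP; split.
  by apply: (sup_least HL) => x [->|->]; [apply: leUl|apply: leUr].
by rewrite leUx; apply/andP; split; apply: (sup_ub HL); [left|right].
Qed.

Lemma sup_empty : sup (fun _ => False) = \bot.
Proof. by apply: le_anti; rewrite le0x andbT; apply: (sup_least HL). Qed.

Lemma frame_meetUr a b c : a `&` (b `|` c) = (a `&` b) `|` (a `&` c).
Proof.
rewrite -!sup_pair (frame_distr HL); congr sup; rewrite predeqE => z.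
split=> [[s [[->|->] ->]]|[->|->]]; [by left|by right| |].
  by exists b; split; [left|].
by exists c; split; [right|].
Qed.

Lemma meet_sup_le S c d : (forall s, S s -> c `&` s <= d) -> c `&` sup S <= d.
Proof. by move=> H; rewrite (frame_distr HL); apply: (sup_least HL) => z [s [Ss ->]]; apply: H. Qed.

Definition join_seq (t : seq L) : L := foldr Order.join \bot t.
Definition meet_seq (t : seq L) : L := foldr Order.meet \top t.

Lemma join_seq_ub t a : List.In a t -> a <= join_seq t.
Proof. by elim: t => //= b t IH [->|/IH ta]; [apply: leUl|apply: le_trans ta (leUr _ _)]. Qed.

Lemma join_seq_least t a : (forall b, List.In b t -> b <= a) -> join_seq t <= a.
Proof.
elim: t => [|b t IH] H /=; first exact: le0x.
by rewrite leUx H /= ?IH //; [move=> c tc; apply: H; right|left].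
Qed.

Lemma meet_seq_lb t a : List.In a t -> meet_seq t <= a.
Proof. by elim: t => //= b t IH [->|/IH ta]; [apply: leIl|apply: le_trans (leIr _ _) ta]. Qed.

Lemma sup_seq t : sup (fun s => List.In s t) = join_seq t.
Proof.
apply: le_anti; rewrite join_seq_least ?andbT; first by apply: (sup_least HL) => x /join_seq_ub.
by move=> b tb; apply: (sup_ub HL).
Qed.

Definition himp a b : L := sup (fun c => c `&` a <= b).

Lemma le_himp a b c : (c <= himp a b) <-> (c `&` a <= b).
Proof.
split=> [cab|cab]; last by apply: (sup_ub HL).
apply: le_trans (leI2 cab (lexx a)) _; rewrite meetC.
by apply: meet_sup_le => s; rewrite meetC.
Qed.

Lemma complemented_of_compl c d : c `&` d <= \bot -> \top <= c `|` d -> complemented sup c.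
Proof.
move=> cd0 cd1; apply: le_anti; rewrite lex1 /=; apply: le_trans cd1 _.
by rewrite leU2 // (sup_ub HL) //; apply: le_anti; rewrite cd0 le0x.
Qed.

Lemma meet_pseudocompl c : c `&` pseudocompl sup c = \bot.
Proof. by apply: le_anti; rewrite le0x andbT; apply: meet_sup_le => s ->. Qed.

Definition lattice_ideal (I : L -> Prop) : Prop :=
  I \bot /\ (forall a b, I b -> a <= b -> I a) /\ (forall a b, I a -> I b -> I (a `|` b)).

Lemma lattice_filter_ge a : lattice_filter (fun c => a <= c).
Proof. by split; [apply: lex1|split=> c d; [apply: le_trans|move=> ac ad; rewrite lexI ac ad]]. Qed.

Lemma lattice_ideal_le b : lattice_ideal (fun c => c <= b).
Proof.
split; [apply: le0x|split=> c d; [by move=> db cd; apply: le_trans db|]].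
by move=> cb db; rewrite leUx cb db.
Qed.

Definition filter_gen (G : L -> Prop) (c : L) : Prop :=
  exists2 t, (forall b, List.In b t -> G b) & meet_seq t <= c.

Definition ideal_gen (G : L -> Prop) (c : L) : Prop :=
  exists2 t, (forall b, List.In b t -> G b) & c <= join_seq t.

Lemma meet_seq_cat t1 t2 : meet_seq (t1 ++ t2) = meet_seq t1 `&` meet_seq t2.
Proof. by elim: t1 => [|b t1 IH] /=; rewrite ?meet1x // IH meetA. Qed.

Lemma join_seq_cat t1 t2 : join_seq (t1 ++ t2) = join_seq t1 `|` join_seq t2.
Proof. by elim: t1 => [|b t1 IH] /=; rewrite ?join0x // IH joinA. Qed.

Lemma lattice_filter_gen G : lattice_filter (filter_gen G).
Proof.
split; first by exists [::].
split=> [c d [t tG tc] cd|c d [t1 t1G t1c] [t2 t2G t2d]].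
  by exists t => //; apply: le_trans cd.
by exists (t1 ++ t2) => [b /List.in_app_iff [/t1G|/t2G]|]; rewrite ?meet_seq_cat ?leI2.
Qed.

Lemma lattice_ideal_gen G : lattice_ideal (ideal_gen G).
Proof.
split; first by exists [::].
split=> [c d [t tG dt] cd|c d [t1 t1G ct1] [t2 t2G dt2]].
  by exists t => //; apply: le_trans dt.
by exists (t1 ++ t2) => [b /List.in_app_iff [/t1G|/t2G]|]; rewrite ?join_seq_cat ?leU2.
Qed.

Section Points.
Local Notation X := (XL L).
Implicit Types (x y z : X).

Lemma phi_top x : phi \top x.
Proof. by case: (proj2_sig x) => [[]]. Qed.

Lemma phi_bot x : ~ phi \bot x.
Proof. by case: (proj2_sig x) => _ []. Qed.

Lemma phi_le x a b : phi a x -> a <= b -> phi b x.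
Proof. by case: (proj2_sig x) => [[_ [up _]] _]; apply: up. Qed.

Lemma phiI x a b : phi (a `&` b) x <-> phi a x /\ phi b x.
Proof.
split=> [xab|[xa xb]]; first by split; apply: phi_le xab _; [apply: leIl|apply: leIr].
by case: (proj2_sig x) => [[_ [_ meet]] _]; apply: meet.
Qed.

Lemma phiU x a b : phi (a `|` b) x <-> phi a x \/ phi b x.
Proof.
split=> [|[xa|xb]]; first by case: (proj2_sig x) => _ [_]; apply.
  by apply: phi_le xa (leUl _ _).
by apply: phi_le xb (leUr _ _).
Qed.

Lemma phi_join_seq x t : phi (join_seq t) x <-> exists2 a, List.In a t & phi a x.
Proof.
split=> [|[a ta xa]]; last by apply: phi_le xa (join_seq_ub ta).
elim: t => [/phi_bot|b t IH /phiU [xb|/IH [a ta xa]]] //; first by exists b => //; left.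
by exists a => //; right.
Qed.

Lemma phi_meet_seq x t : phi (meet_seq t) x <-> forall a, List.In a t -> phi a x.
Proof.
split=> [xt a ta|]; first exact: phi_le xt (meet_seq_lb ta).
elim: t => [_|b t IH tx] /=; first exact: phi_top.
by apply/phiI; split; [apply: tx; left|apply: IH => a ta; apply: tx; right].
Qed.

Lemma phi_sup x S s : S s -> phi s x -> phi (sup S) x.
Proof. by move=> Ss xs; apply: phi_le xs (sup_ub HL Ss). Qed.

Lemma phi_pseudocompl x c : complemented sup c -> phi (pseudocompl sup c) x <-> ~ phi c x.
Proof.
move=> cc; split=> [xc' xc|nxc].
  have : phi (c `&` pseudocompl sup c) x by apply/phiI.
  by rewrite meet_pseudocompl => /phi_bot.
by have /phiU [] : phi (c `|` pseudocompl sup c) x by rewrite cc; apply: phi_top.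
Qed.

Lemma XL_eq x y : (forall a, phi a x <-> phi a y) -> x = y.
Proof.
by move=> xy; apply: eq_sig_hprop => [? ? ?|]; [apply: Prop_irrelevance|rewrite predeqE].
Qed.

Theorem prime_filter_theorem (F I : L -> Prop) :
  lattice_filter F -> lattice_ideal I -> (forall a, F a -> ~ I a) ->
  exists x : X, subset_of F (proj1_sig x) /\ forall a, I a -> ~ phi a x.
Proof.
move=> [Ftop [Fup Fmeet]] [Ibot [Idown Ijoin]] FI.
pose P G := [/\ forall a b, G a -> a <= b -> G b,
                forall a b, G a -> G b -> G (a `&` b) & forall a, G a -> ~ I a].
have [M [[Mup Mmeet MI] FM Mmax]] : exists M, [/\ P M, subset_of F M &
    forall G, P G -> subset_of M G -> subset_of G M].
  apply: zorn_superset => [|Ch ChP Chtot _]; first by split.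
  split=> [a b [A [ChA Aa]] ab|a b [A [ChA Aa]] [B [ChB Bb]]|a [A [ChA Aa]]].
  - by exists A; split=> //; case: (ChP A ChA) => up _ _; apply: up ab.
  - case: (Chtot A B ChA ChB) => [AB|BA].
      by exists B; split=> //; case: (ChP B ChB) => _ meet _; apply: meet => //; apply: AB.
    by exists A; split=> //; case: (ChP A ChA) => _ meet _; apply: meet => //; apply: BA.
  - by case: (ChP A ChA) => _ _; apply.
have Mext a : ~ M a -> exists2 m, M m & I (m `&` a).
  move=> nMa; apply: NNPP => nex.
  pose Ma c := exists2 m, M m & m `&` a <= c.
  have PMa : P Ma.
    split=> [c d [m Mm mc] cd|c d [m1 Mm1 m1c] [m2 Mm2 m2d]|c [m Mm mc] Ic].
    - by exists m => //; apply: le_trans cd.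
    - exists (m1 `&` m2); first exact: Mmeet.
      by rewrite lexI (le_trans _ m1c) ?(le_trans _ m2d) // leI2 ?leIl ?leIr.
    - by apply: nex; exists m => //; apply: Idown Ic mc.
  apply: nMa; apply: (Mmax Ma PMa); last by exists \top; [apply: FM|apply: leIr].
  by move=> m Mm; exists m => //; apply: leIl.
have pM : prime_filter M.
  split; first by split; [apply: FM|split].
  split=> [Mbot|a b Mab]; first by apply: MI Mbot Ibot.
  apply: NNPP => /not_or_and [nMa nMb].
  have [m1 Mm1 I1] := Mext a nMa; have [m2 Mm2 I2] := Mext b nMb.
  apply: (MI ((m1 `&` m2) `&` (a `|` b))); first by apply: (Mmeet) => //; apply: (Mmeet).
  rewrite frame_meetUr; apply: Idown (Ijoin _ _ I1 I2) _.
  by apply: leU2; apply: leI2 => //; [apply: leIl|apply: leIr].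
by exists (exist _ M pM); split=> // a /MI.
Qed.

Lemma phi_subset a b : subset_of (phi a) (phi b) <-> a <= b.
Proof.
split=> [ab|ab x xa]; last exact: phi_le xa ab.
apply: NNPP => nab.
have [|x [Fx Ix]] := prime_filter_theorem (lattice_filter_ge a) (lattice_ideal_le b).
  by move=> c ac cb; apply: nab; apply: le_trans cb.
by apply: (Ix b (lexx b)); apply: ab; apply: Fx.
Qed.

Definition phi_separating (P : X -> Prop) : Prop :=
  forall a b, (forall x, P x -> phi a x -> phi b x) -> a <= b.

Lemma XL_separating : phi_separating (fun _ => True).
Proof. by move=> a b ab; apply/phi_subset => x; apply: ab. Qed.

Lemma complemented_of_phi_partition P c d : phi_separating P ->
  (forall x, P x -> (phi c x <-> ~ phi d x)) -> complemented sup c.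
Proof.
move=> sepP cd; apply: (@complemented_of_compl c d).
  by apply: sepP => x Px /phiI [xc xd]; case: (proj1 (cd x Px) xc).
apply: sepP => x Px _; apply/phiU.
by case: (classic (phi d x)) => [|/(cd x Px)]; [right|left].
Qed.

Lemma compact_frame_cover S : compact_frame sup -> \top <= sup S ->
  exists2 t, (forall a, List.In a t -> S a) & forall x, exists2 a, List.In a t & phi a x.
Proof.
move=> cpt top; have [t [tS topt]] := cpt S top.
by exists t => // x; apply/phi_join_seq; rewrite -sup_seq; apply: phi_le (phi_top x) topt.
Qed.

Lemma compact_frame_of_cover P : phi_separating P ->
  (forall S, \top <= sup S -> exists2 t, (forall a, List.In a t -> S a) &
     forall x, P x -> exists2 a, List.In a t & phi a x) ->
  compact_frame sup.
Proof.
move=> sepP cov S top; have [t tS tcov] := cov S top.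
by exists t; split=> //; rewrite sup_seq; apply: sepP => x Px _; apply/phi_join_seq; apply: tcov.
Qed.

Lemma zero_dim_frame_of P : phi_separating P ->
  (forall a x, P x -> phi a x -> phi (sup (fun c => complemented sup c /\ c <= a)) x) ->
  zero_dim_frame sup.
Proof.
move=> sepP reg a; apply: le_anti; rewrite (sepP _ _ (reg a)) /=.
by apply: (sup_least HL) => c [].
Qed.

End Points.

Section PriestleySpace.
Local Notation X := (XL L).
Local Notation op := (@XL_opens _ L).
Local Notation le := (@XL_le _ L).
Implicit Types (x y z : X) (U V W : X -> Prop).

Definition phi_diff c d : X -> Prop := fun x => phi c x /\ ~ phi d x.

Lemma open_phi a : op (phi a).
Proof. by apply: generated_opens_subbase; exists a; left. Qed.

Lemma open_nphi a : op (fun x => ~ phi a x).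
Proof. by apply: generated_opens_subbase; exists a; right. Qed.

Lemma clopen_phi a : clopen_set op (phi a).
Proof. by split; [apply: open_phi|apply: open_nphi]. Qed.

Lemma clopup_phi a : clopup op le (phi a).
Proof. by split; [apply: clopen_phi|move=> x y xa; apply]. Qed.

Lemma clopen_phi_diff c d : clopen_set op (phi_diff c d).
Proof.
split; first by apply: generated_opens_meet; [apply: open_phi|apply: open_nphi].
rewrite /closed_set; suff -> : (fun x => ~ phi_diff c d x) = (fun x => ~ phi c x \/ phi d x).
  by apply: generated_opens_join; [apply: open_nphi|apply: open_phi].
rewrite predeqE => x; split=> [ncd|[nc|xd] [xc nd]] //.
by case: (classic (phi c x)) => [xc|]; [right; apply: NNPP => nd; apply: ncd|left].
Qed.

Lemma XL_open_basic U x : op U -> U x ->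
  exists c d, phi_diff c d x /\ subset_of (phi_diff c d) U.
Proof.
move=> oU Ux; have [s [sB [sx sU]]] := oU x Ux.
suff [c [d [cdx cds]]] : exists c d, phi_diff c d x /\
    forall y, phi_diff c d y -> forall V, List.In V s -> V y.
  by exists c, d; split=> // y /cds /sU.
elim: s sB sx {sU} => [|V s IH] sB sx.
  by exists \top, \bot; split=> //; split; [apply: phi_top|apply: phi_bot].
have [c [d [[xc nxd] cds]]] :=
  IH (fun W sW => sB W (or_intror sW)) (fun W sW => sx W (or_intror sW)).
have := sx V (or_introl erefl); case: (sB V (or_introl erefl)) => a [->|->] xV.
  exists (c `&` a), d; split=> [|y [/phiI [yc ya] nyd] W [<-|sW]] //.
    by split=> //; apply/phiI.
  exact: cds.
exists c, (d `|` a); split=> [|y [yc /phiU nyda] W [<-|sW]]; first by split=> // /phiU [].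
  by move=> ya; apply: nyda; right.
by apply: cds => //; split=> // yd; apply: nyda; left.
Qed.

Lemma XL_subbase_cover D : (forall U, D U -> XL_subbase U) ->
  (forall x, exists U, D U /\ U x) -> has_finite_subcover D.
Proof.
move=> DB Dcov.
pose Dphi a := D (phi a); pose Dnphi b := D (fun x => ~ phi b x).
suff [tb tbD [ta taD tab]] : exists2 tb, (forall b, List.In b tb -> Dnphi b) &
    exists2 ta, (forall a, List.In a ta -> Dphi a) & meet_seq tb <= join_seq ta.
  exists (map phi ta ++ map (fun b x => ~ phi b x) tb); split.
    by move=> U /List.in_app_iff [] /List.in_map_iff [c [<- tc]]; [apply: taD|apply: tbD].
  move=> x; case: (classic (forall b, List.In b tb -> phi b x)) => [/phi_meet_seq xtb|nxtb].
    have /phi_join_seq [a taa xa] := phi_le xtb tab.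
    by exists (phi a); split=> //; apply/List.in_app_iff; left; apply: List.in_map.
  have [b tbb nxb] := not_all_in_seq nxtb.
  exists (fun x => ~ phi b x); split=> //; apply/List.in_app_iff; right.
  exact: (List.in_map (fun b x => ~ phi b x)).
(* Otherwise the filter generated by the [b]s misses the ideal generated by the
   [a]s, and a prime filter separating them is a point outside every member of [D]. *)
apply: NNPP => nfin.
have [|x [Fx Ix]] := prime_filter_theorem (lattice_filter_gen Dnphi) (lattice_ideal_gen Dphi).
  move=> c [tb tbD tbc] [ta taD cta]; apply: nfin; exists tb => //; exists ta => //.
  exact: le_trans cta.
have [U [DU Ux]] := Dcov x; have [a [eU|eU]] := DB U DU; rewrite eU in DU Ux.
  by apply: (Ix a) Ux; exists [:: a] => [c [<-|]//|]; apply: leUl.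
by apply: Ux; apply: Fx; exists [:: a] => [c [<-|]//|]; apply: leIl.
Qed.

Theorem XL_compact : compact_space op.
Proof. exact: alexander_subbase XL_subbase_cover. Qed.

Lemma open_upset_phi_nbhd U x : op U -> upset le U -> U x ->
  exists2 a, phi a x & subset_of (phi a) U.
Proof.
move=> oU uU Ux.
have [|||t tx nUt] := compact_closed_cover_image (S := proj1_sig x)
    (f := fun a y => ~ phi a y) (K := fun y => ~ U y) XL_compact.
- exact: closed_setC oU.
- by move=> a _; apply: open_nphi.
- move=> y nUy; apply: NNPP => nxy; apply: nUy; apply: uU Ux _ => a xa.
  by apply: NNPP => nya; apply: nxy; exists a.
exists (meet_seq t); first by apply/phi_meet_seq => a /tx.
move=> y /phi_meet_seq yt; apply: NNPP => /nUt [a ta]; apply; exact: yt.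
Qed.

Lemma clopupP U : clopup op le U <-> exists a, U = phi a.
Proof.
split=> [[[oU cU] uU]|[a ->]]; last exact: clopup_phi.
have [||t tU Ucov] := compact_closed_cover_image
    (S := fun a => subset_of (phi a) U) (f := phi) XL_compact cU.
- by move=> a _; apply: open_phi.
- by move=> x Ux; have [a xa aU] := open_upset_phi_nbhd oU uU Ux; exists a.
exists (join_seq t); rewrite predeqE => x; split=> [/Ucov xt|/phi_join_seq [a ta xa]].
  exact/phi_join_seq.
exact: tU ta _ xa.
Qed.

Lemma closure_phi_union S : Defs.closure op (fun x => exists2 a, S a & phi a x) = phi (sup S).
Proof.
rewrite predeqE => x; split.
  apply: closure_min; first exact: open_nphi.
  by move=> y [a Sa ya]; apply: phi_sup Sa ya.
move=> xS V oV Vx.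
have [c [d [[xc nxd] cdV]]] := XL_open_basic oV Vx.
(* Distributivity: [c /\ sup S <= d] would already put [d] in [x]. *)
have [s Ss ncsd] : exists2 s, S s & ~ c `&` s <= d.
  apply: NNPP => H; apply: nxd; apply: phi_le (proj2 (phiI _ _ _) (conj xc xS)) _.
  by apply: meet_sup_le => s Ss; apply: NNPP => ncs; apply: H; exists s.
have [y /phiI [yc ys] nyd] : exists2 y, phi (c `&` s) y & ~ phi d y.
  apply: NNPP => H; apply: ncsd; apply/phi_subset => y ycs.
  by apply: NNPP => nyd; apply: H; exists y.
by exists y; split; [apply: cdV|exists s].
Qed.

Lemma closure_open_upset U : op U -> upset le U ->
  Defs.closure op U = phi (sup (fun a => subset_of (phi a) U)).
Proof.
move=> oU uU; rewrite -closure_phi_union; congr (Defs.closure op).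
rewrite predeqE => x; split=> [Ux|[a aU /aU //]].
by have [a xa aU] := open_upset_phi_nbhd oU uU Ux; exists a.
Qed.

Lemma down_phi_diff c d y : down le (phi_diff c d) y <-> ~ phi (himp c d) y.
Proof.
split=> [[z [[zc nzd] yz]] ycd|nycd].
  by apply: nzd; apply: phi_le (proj2 (phiI _ _ _) (conj (yz _ ycd) zc)) _; apply/le_himp.
pose F e := exists2 f, phi f y & f `&` c <= e.
have [||z [Fz Iz]] := prime_filter_theorem (F := F) _ (lattice_ideal_le d).
- split; first by exists \top; [apply: phi_top|apply: lex1].
  split=> [e e' [f yf fe] ee'|e e' [f yf fe] [f' yf' fe']].
    by exists f => //; apply: le_trans ee'.
  exists (f `&` f'); first exact/phiI.
  by rewrite lexI (le_trans _ fe) ?(le_trans _ fe') // leI2 ?leIl ?leIr.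
- by move=> e [f yf fe] ed; apply: nycd; apply: phi_le yf _; apply/le_himp; apply: le_trans ed.
exists z; split; first by split; [apply: Fz; exists \top; [apply: phi_top|apply: leIr]|apply: Iz].
by move=> f yf; apply: Fz; exists f => //; apply: leIl.
Qed.

Lemma clopen_phi_diff_union U : clopen_set op U ->
  exists p : seq (L * L), U = fun x => exists2 q, List.In q p & phi_diff q.1 q.2 x.
Proof.
move=> [oU cU].
have [||p pU Ucov] := compact_closed_cover_image
    (S := fun q : L * L => subset_of (phi_diff q.1 q.2) U)
    (f := fun q => phi_diff q.1 q.2) XL_compact cU.
- by move=> q _; apply: (proj1 (clopen_phi_diff _ _)).
- by move=> x Ux; have [c [d [xcd cdU]]] := XL_open_basic oU Ux; exists (c, d).
by exists p; rewrite predeqE => x; split=> [/Ucov|[q /pU]] //; apply.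
Qed.

Lemma clopen_down U : clopen_set op U -> clopen_set op (down le U).
Proof.
case/clopen_phi_diff_union => p ->.
suff -> : down le (fun x => exists2 q, List.In q p & phi_diff q.1 q.2 x) =
          (fun y => ~ phi (meet_seq [seq himp q.1 q.2 | q <- p]) y).
  exact: clopen_setC (clopen_phi _).
rewrite predeqE => y; rewrite phi_meet_seq; split.
  move=> [x [[q pq xq] yx]] yp; apply: (proj1 (down_phi_diff q.1 q.2 y)); first by exists x.
  by apply: yp; apply: (List.in_map (fun q => himp q.1 q.2)).
move=> /not_all_in_seq [e pe nye]; have /List.in_map_iff [q [eq pq]] := pe.
rewrite -eq in nye; have [x [xq yx]] := proj2 (down_phi_diff q.1 q.2 y) nye.
by exists x; split=> //; exists q.
Qed.

Lemma XL_hausdorff : hausdorff_space op.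
Proof.
move=> x y nxy.
have [a nxya] : exists a, ~ (phi a x <-> phi a y).
  by apply: NNPP => H; apply: nxy; apply: XL_eq => a; apply: NNPP => ?; apply: H; exists a.
case: (classic (phi a x)) => xa.
  exists (phi a), (fun z => ~ phi a z).
  split; [exact: open_phi|split; [exact: open_nphi|split=> //; split=> [ya|z [] //]]].
  by apply: nxya; split.
exists (fun z => ~ phi a z), (phi a).
split; [exact: open_nphi|split; [exact: open_phi|split=> //; split=> [|z [] //]]].
by apply: NNPP => nya; apply: nxya; split=> [/xa|/nya].
Qed.

Lemma XL_zero_dim : zero_dim_space op.
Proof.
move=> U oU x Ux; have [c [d [xcd cdU]]] := XL_open_basic oU Ux.
by exists (phi_diff c d); split=> //; apply: clopen_phi_diff.
Qed.

Lemma XL_partial_order : partial_order le.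
Proof.
split=> [x a //|]; split=> [x y z xy yz a /xy /yz //|x y xy yx].
by apply: XL_eq => a; split; [apply: xy|apply: yx].
Qed.

Lemma XL_priestley_separation x y : ~ le x y -> exists U, clopup op le U /\ U x /\ ~ U y.
Proof.
move=> nxy; have [a xa nya] : exists2 a, phi a x & ~ phi a y.
  by apply: NNPP => H; apply: nxy => a xa; apply: NNPP => nya; apply: H; exists a.
by exists (phi a); split; [apply: clopup_phi|split].
Qed.

Theorem XL_L_space : L_space op le.
Proof.
have stone : stone_space op.
  by split; [apply: XL_compact|split; [apply: XL_hausdorff|apply: XL_zero_dim]].
split; first by split=> //; split; [apply: XL_partial_order|apply: XL_priestley_separation].
split=> [U|U oU uU]; first exact: clopen_down.
by rewrite closure_open_upset //; apply: open_phi.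
Qed.

Lemma downset_phi_complemented c : complemented sup c -> downset le (phi c).
Proof.
move=> cc z w zc wz; apply: NNPP => /(phi_pseudocompl w cc) wc'.
exact: (proj1 (phi_pseudocompl z cc) (wz _ wc') zc).
Qed.

Lemma clopen_biset_complemented V : clopen_set op V -> upset le V -> downset le V ->
  exists2 c, complemented sup c & V = phi c.
Proof.
move=> cV uV dV.
have [c eVc] := proj1 (clopupP V) (conj cV uV).
have [|d eVd] := proj1 (clopupP (fun x => ~ V x)).
  by split; [apply: clopen_setC|move=> x y nVx xy Vy; apply: nVx; apply: dV Vy xy].
exists c => //; apply: (complemented_of_phi_partition (d := d) XL_separating) => x _.
by rewrite -eVc -eVd; split=> [Vx|/NNPP].
Qed.

Lemma L_compact_of_compact_frame : compact_frame sup -> L_compact op le.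
Proof.
move=> cpt x; exists (fun _ => True); split.
  have -> : (fun _ : X => True) = phi \top by rewrite predeqE => y; split=> // _; apply: phi_top.
  exact: clopup_phi.
split=> // W oW uW TW z _.
have [|t tW tcov] := compact_frame_cover (S := fun a => subset_of (phi a) W) cpt.
  by apply/phi_subset => y _; rewrite -closure_open_upset //; apply: TW.
by have [a /tW] := tcov z; apply.
Qed.

Lemma cen_dense_of_zero_dim_frame : zero_dim_frame sup ->
  forall U, clopup op le U -> subset_of U (Defs.closure op (cen op le U)).
Proof.
move=> zd U /clopupP [a ->] x xa.
have : phi (sup (fun c => complemented sup c /\ c <= a)) x by rewrite -zd.
rewrite -closure_phi_union; apply: closure_mono => y [c [cc ca] yc].
exists (phi c); split; first exact: clopen_phi.
split; first by case: (clopup_phi c).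
split; first exact: downset_phi_complemented.
by split=> //; apply/phi_subset.
Qed.

Lemma compact_frame_of_L_compact : L_compact op le -> compact_frame sup.
Proof.
move=> Lc; apply: (compact_frame_of_cover XL_separating) => S top.
pose W x := exists2 a, S a & phi a x.
have Wcov x : W x.
  have [V [_ [VW Vx]]] := Lc x; apply: VW Vx.
  - apply: generated_opens_local => y [a Sa ya].
    by exists (phi a); split=> //; [apply: open_phi|move=> z za; exists a].
  - by move=> y z [a Sa ya] yz; exists a => //; apply: yz.
  - by move=> y _; rewrite /W closure_phi_union; apply: phi_le (phi_top y) top.
have [|||t tS tcov] :=
  compact_closed_cover_image (S := S) (f := phi) (K := fun _ : X => True) XL_compact.
- by move=> x [].
- by move=> a _; apply: open_phi.
- by move=> x _; apply: Wcov.
by exists t => // x _; apply: tcov.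
Qed.

Lemma zero_dim_frame_of_cen_dense :
  (forall U, clopup op le U -> subset_of U (Defs.closure op (cen op le U))) ->
  zero_dim_frame sup.
Proof.
move=> dense; apply: (zero_dim_frame_of XL_separating) => a x _ xa.
apply: closure_min (dense _ (clopup_phi a) x xa); first exact: open_nphi.
move=> y [V [cV [uV [dV [Va Vy]]]]].
have [c cc eVc] := clopen_biset_complemented cV uV dV.
by rewrite eVc in Va Vy; apply: phi_sup Vy; split=> //; apply/phi_subset.
Qed.

Theorem stone_frame_XL : stone_frame sup <-> stone_L_space op le.
Proof.
split=> [[cpt zd]|[_ [Lc dense]]].
  split; first exact: XL_L_space.
  by split; [apply: L_compact_of_compact_frame|apply: cen_dense_of_zero_dim_frame].
by split; [apply: compact_frame_of_L_compact|apply: zero_dim_frame_of_cen_dense].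
Qed.

End PriestleySpace.

Section SpatialPart.
Local Notation X := (XL L).
Local Notation Y := (YL L).
Local Notation op := (@XL_opens _ L).
Local Notation opY := (@YL_opens _ L).
Local Notation le := (@XL_le _ L).
Implicit Types (x z : X) (y : Y) (V : Y -> Prop).

Definition spatial_point x : Prop := clopen_set op (down le (fun z => z = x)).

Definition completely_prime x : Prop :=
  forall S, phi (sup S) x -> exists2 s, S s & phi s x.

Definition phiY a : Y -> Prop := fun y => phi a (proj1_sig y).

Lemma spatial_pointP x : spatial_point x <-> completely_prime x.
Proof.
split=> [cD S xS|cpx].
  (* The complement of [down x] is a clopen upset [phi d] missing [x], and every
     [s] outside [x] lies below [d]. *)
  have [d eDd] : exists d, (fun z => ~ down le (fun z => z = x) z) = phi d.
    apply/clopupP; split; first exact: clopen_setC cD.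
    by move=> z w nDz zw [v [-> wx]]; apply: nDz; exists x; split=> // a /zw /wx.
  have nxd : ~ phi d x by rewrite -eDd /= => nDx; apply: nDx; exists x; split=> // ? ?.
  apply: NNPP => nS; apply: nxd; apply: phi_le xS _; apply: (sup_least HL) => s Ss.
  apply/phi_subset => z zs; rewrite -eDd /= => -[v [-> zx]].
  by apply: nS; exists s => //; apply: zx.
(* [down x] is the complement of [phi d] for the join [d] of everything outside [x]. *)
pose d := sup (fun a => ~ phi a x).
have nxd : ~ phi d x by move/cpx => [s ns xs].
rewrite /spatial_point; suff -> : down le (fun z => z = x) = (fun z => ~ phi d z).
  exact: clopen_setC (clopen_phi d).
rewrite predeqE => z; split=> [[v [-> zx]] zd|nzd]; first by apply: nxd; apply: zx.
by exists x; split=> // a za; apply: NNPP => nxa; apply: nzd; apply: phi_sup nxa za.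
Qed.

Lemma completely_prime_filter_point F : completely_prime_filter sup F ->
  exists x, proj1_sig x = F /\ spatial_point x.
Proof.
move=> [Ff cpF].
have pF : prime_filter F.
  split=> //; split=> [|a b]; first by rewrite -sup_empty => /cpF [s []].
  by rewrite -sup_pair => /cpF [s [[->|->] Fs]]; [left|right].
exists (exist _ F pF); split=> //; apply/spatial_pointP => S /cpF [s [Ss Fs]].
by exists s.
Qed.

Lemma spatial_separating : spatial_frame sup -> phi_separating spatial_point.
Proof.
move=> sp a b ab; apply: NNPP => nab.
(* A completely prime filter separating [a `&` b] from [a] contains [a] but not [b]. *)
have [|F [cpF FF]] := sp (a `&` b) a; first by move=> eab; apply: nab; rewrite -eab leIr.
have [[_ [Fup Fmeet]] _] := cpF.
have [x [ex spx]] := completely_prime_filter_point cpF.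
case: FF => [[Fab nFa]|[Fa nFab]]; first by apply: nFa; apply: Fup Fab (leIl _ _).
apply: nFab; apply: Fmeet => //; rewrite -ex; apply: (ab x spx).
by rewrite /phi ex.
Qed.

Lemma YL_opensP V : opY V <-> exists a, V = phiY a.
Proof.
split=> [[U [/clopupP [a ->] ->]]|[a ->]]; first by exists a.
by exists (phi a); split; [apply: clopup_phi|].
Qed.

Lemma phiY_sup y S : phiY (sup S) y -> exists2 s, S s & phiY s y.
Proof. exact: (proj1 (spatial_pointP _) (proj2_sig y)). Qed.

Lemma phiY_regular a y : zero_dim_frame sup -> phiY a y ->
  exists2 c, complemented sup c /\ c <= a & phiY c y.
Proof. by move=> zd ya; apply: phiY_sup; rewrite /phiY -(zd a). Qed.

Lemma YL_compact_of_compact_frame : spatial_frame sup -> compact_frame sup -> compact_space opY.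
Proof.
move=> sp cpt C Cop Ccov.
have [|t tC tcov] := compact_frame_cover (S := fun a => C (phiY a)) cpt.
  apply: (spatial_separating sp) => x spx _.
  have [U [CU Ux]] := Ccov (exist _ x spx); have [a eU] := proj1 (YL_opensP U) (Cop U CU).
  by rewrite eU in CU Ux; apply: phi_sup CU Ux.
exists (map phiY t); split=> [U /List.in_map_iff [a [<- ta]]|y]; first exact: tC.
have [a ta ya] := tcov (proj1_sig y).
by exists (phiY a); split=> //; apply: List.in_map.
Qed.

Lemma YL_hausdorff_of_zero_dim_frame : zero_dim_frame sup -> hausdorff_space opY.
Proof.
move=> zd.
have sep y1 y2 a : phiY a y1 -> ~ phiY a y2 -> exists U V,
    opY U /\ opY V /\ U y1 /\ V y2 /\ (forall y, ~ (U y /\ V y)).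
  move=> y1a ny2a; have [c [cc ca] y1c] := phiY_regular zd y1a.
  exists (phiY c), (phiY (pseudocompl sup c)).
  split; first by apply/YL_opensP; exists c.
  split; first by apply/YL_opensP; exists (pseudocompl sup c).
  split=> //; split=> [|y [yc /(phi_pseudocompl _ cc)]] //.
  by apply/(phi_pseudocompl _ cc) => y2c; apply: ny2a; apply: phi_le y2c ca.
move=> y1 y2 ny12.
have [a nya] : exists a, ~ (phiY a y1 <-> phiY a y2).
  apply: NNPP => H; apply: ny12; apply: eq_sig_hprop => [? ? ?|]; first exact: Prop_irrelevance.
  by apply: XL_eq => a; apply: NNPP => ?; apply: H; exists a.
case: (classic (phiY a y1)) => y1a; first by apply: (sep _ _ _ y1a) => y2a; apply: nya.
have [|U [V [oU [oV [Uy2 [Vy1 UV]]]]]] := sep y2 y1 a _ y1a.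
  by apply: NNPP => ny2a; apply: nya; split=> [/y1a|/ny2a].
by exists V, U; do 4!(split=> //); move=> y [Vy Uy]; apply: (UV y).
Qed.

Lemma YL_zero_dim_of_zero_dim_frame : zero_dim_frame sup -> zero_dim_space opY.
Proof.
move=> zd V /YL_opensP [a ->] y ya.
have [c [cc ca] yc] := phiY_regular zd ya.
exists (phiY c); split; last by split=> // z zc; apply: phi_le zc ca.
split; first by apply/YL_opensP; exists c.
rewrite /closed_set; suff -> : (fun w : Y => ~ phiY c w) = phiY (pseudocompl sup c).
  by apply/YL_opensP; exists (pseudocompl sup c).
by rewrite predeqE => z; split=> /(phi_pseudocompl _ cc).
Qed.

Lemma compact_frame_of_YL : spatial_frame sup -> compact_space opY -> compact_frame sup.
Proof.
move=> sp Ycpt; apply: (compact_frame_of_cover (spatial_separating sp)) => S top.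
have [|y|s [sS scov]] := Ycpt (fun V => exists2 c, S c & V = phiY c).
- by move=> V [c _ ->]; apply/YL_opensP; exists c.
- have [c Sc yc] := phiY_sup (phi_le (phi_top _) top : phiY (sup S) y).
  by exists (phiY c); split=> //; exists c.
have [t tS est] := seq_in_image sS.
exists t => // x spx; have [U [sU Ux]] := scov (exist _ x spx).
rewrite est in sU; have /List.in_map_iff [c [eU tc]] := sU.
by exists c => //; rewrite -eU in Ux.
Qed.

Lemma zero_dim_frame_of_YL : spatial_frame sup -> zero_dim_space opY -> zero_dim_frame sup.
Proof.
move=> sp Yzd; apply: (zero_dim_frame_of (spatial_separating sp)) => a x spx xa.
have [|W [[oW cW] [Wx Wa]]] := Yzd (phiY a) _ (exist _ x spx) xa.
  by apply/YL_opensP; exists a.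
have [c eWc] := proj1 (YL_opensP W) oW; have [d eWd] := proj1 (YL_opensP _) cW.
subst W.
have cc : complemented sup c.
  apply: (complemented_of_phi_partition (d := d) (spatial_separating sp)) => z spz.
  have := congr1 (fun V : Y -> Prop => V (exist _ z spz)) eWd; rewrite /phiY /= => <-.
  by split=> [zc /(_ zc)|/NNPP].
apply: phi_sup (Wx : phi c x); split=> //.
by apply: (spatial_separating sp) => z spz zc; apply: (Wa (exist _ z spz)).
Qed.

Theorem stone_frame_YL : spatial_frame sup -> (stone_frame sup <-> stone_space opY).
Proof.
move=> sp; split=> [[cpt zd]|[cpt [_ zd]]].
  split; first exact: YL_compact_of_compact_frame.
  by split; [apply: YL_hausdorff_of_zero_dim_frame|apply: YL_zero_dim_of_zero_dim_frame].
by split; [apply: compact_frame_of_YL|apply: zero_dim_frame_of_YL].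
Qed.

End SpatialPart.

End Frame.

Theorem corollary5p18 (disp : Order.disp_t) (L : tbLatticeType disp)
  (sup : (L -> Prop) -> L) (HL : is_frame sup) :
  (stone_frame sup <-> stone_L_space (@XL_opens _ L) (@XL_le _ L)) /\
  (spatial_frame sup ->
     (stone_frame sup <-> stone_L_space (@XL_opens _ L) (@XL_le _ L)) /\
     (stone_frame sup <-> stone_space (@YL_opens _ L))).
Proof.
split; first exact: (stone_frame_XL HL).
by move=> sp; split; [apply: (stone_frame_XL HL)|apply: (stone_frame_YL HL)].
Qed.
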